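(* Let $\Omega\subset V_0$ be open, let $f\colon\Omega\to\mathbb{R}$ be continuous and suppose $\Gamma_f$ is a ruled surface. Let $R_1,R_2$ be distinct rulings of $\Gamma_f$, and for $i=1,2$ let $I_i\subset\mathbb{R}$ and $g_{R_i}\colon I_i\to\mathbb{R}$ be such that $\Pi(R_i)=\{(x,0,g_{R_i}(x)):x\in I_i\}$. Then either $g_{R_1}(x)\le g_{R_2}(x)$ for all $x\in I_1\cap I_2$, or $g_{R_1}(x)\ge g_{R_2}(x)$ for all $x\in I_1\cap I_2$.
   Context: $\mathbb{H}$ is $\mathbb{R}^3$ with product $(x,y,z)\cdot(x',y',z')=(x+x',y+y',z+z'+\frac{xy'-yx'}{2})$; $Y^t=(0,t,0)$. A horizontal line is a set $\{p\cdot tv:t\in\mathbb{R}\}$, $v=(a,b,0)\neq0$; a ruled surface is a union of horizontal line segments (rulings) with endpoints in its boundary. $V_0=\{(x,0,z)\}$; for $f\colon\Omega\to\mathbb{R}$, $\Gamma_f=\{u\cdot Y^{f(u)}:u\in\Omega\}$. The intrinsic projection is $\Pi(x,y,z)=(x,0,z-\frac{xy}{2})$ (the projection of a horizontal segment not parallel to $Y$ is the graph of a quadratic function of $x$). *)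

From Stdlib Require Import Reals Lra.
Open Scope R_scope.

Record H := mkH { hx : R ; hy : R ; hz : R }.

Definition hmul (p q : H) : H :=
  mkH (hx p + hx q) (hy p + hy q)
      (hz p + hz q + (hx p * hy q - hy p * hx q) / 2).

Definition hset := H -> Prop.

(* Euclidean topology of R^3 (max-norm balls): closure of a set *)
Definition hclosure (S : hset) : hset := fun p =>
  forall eps, 0 < eps -> exists q, S q /\
    Rabs (hx p - hx q) < eps /\ Rabs (hy p - hy q) < eps /\ Rabs (hz p - hz q) < eps.

Definition hboundary (S : hset) : hset := fun p => hclosure S p /\ ~ S p.

Definition hvec (t a b : R) : H := mkH (t * a) (t * b) 0.

Definition in_param (lo hi : option R) (t : R) : Prop :=
  (match lo with None => True | Some l => l < t end) /\
  (match hi with None => True | Some h => t < h end).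

Definition is_ruling (S : hset) (Rl : hset) : Prop :=
  exists (p : H) (a b : R) (lo hi : option R),
    (a <> 0 \/ b <> 0) /\
    (exists t, in_param lo hi t) /\
    (forall q, Rl q <-> exists t, in_param lo hi t /\ q = hmul p (hvec t a b)) /\
    (forall q, Rl q -> S q) /\
    (forall l, lo = Some l -> hboundary S (hmul p (hvec l a b))) /\
    (forall h, hi = Some h -> hboundary S (hmul p (hvec h a b))).

Definition ruled_surface (S : hset) : Prop :=
  forall q, S q -> exists Rl, is_ruling S Rl /\ Rl q.

(* Subsets of V0 = {(x,0,z)} are encoded as predicates on (x,z). *)
Definition open_V0 (Om : R -> R -> Prop) : Prop :=
  forall x z, Om x z -> exists d, 0 < d /\
    forall x' z', Rabs (x' - x) < d -> Rabs (z' - z) < d -> Om x' z'.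

Definition continuous_on_V0 (Om : R -> R -> Prop) (f : R -> R -> R) : Prop :=
  forall x z, Om x z -> forall eps, 0 < eps -> exists d, 0 < d /\
    forall x' z', Om x' z' -> Rabs (x' - x) < d -> Rabs (z' - z) < d ->
      Rabs (f x' z' - f x z) < eps.

(* Intrinsic graph Gamma_f = { u . Y^{f(u)} : u in Omega } *)
Definition igraph (Om : R -> R -> Prop) (f : R -> R -> R) : hset := fun q =>
  exists x z, Om x z /\ q = hmul (mkH x 0 z) (mkH 0 (f x z) 0).

Definition Pi (p : H) : H := mkH (hx p) 0 (hz p - hx p * hy p / 2).

(* If [g1 - g2] changed sign on [I1 ∩ I2], by the intermediate value theorem
   it would vanish at some [xs] in between, where the two rulings then have
   points with the same intrinsic projection.  On an intrinsic graph the
   [y]-coordinate is a function of the projection, so these points coincide.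
   The projection of a horizontal line is a parabola in [x] whose slope at the
   abscissa of a point [q] of the line is [- hy q]; hence the two parabolas are
   tangent at [xs], their difference is [c (x - xs)^2] and has constant sign. *)

From Stdlib Require Import Reals Lra Classical.
Open Scope R_scope.

Definition hline_at (p : H) (a b x : R) : H := hmul p (hvec ((x - hx p) / a) a b).

Definition hline_proj_z (p : H) (a b x : R) : R := hz (Pi (hline_at p a b x)).

Definition between (u v w : R) : Prop := 0 <= (v - u) * (w - v).

Lemma hx_hmul_hvec p t a b : hx (hmul p (hvec t a b)) = hx p + t * a.
Proof. unfold hmul, hvec; simpl; ring. Qed.

Lemma hline_at_param p a b t x :
  a <> 0 -> hx p + t * a = x -> hline_at p a b x = hmul p (hvec t a b).
Proof. intros Ha <-. unfold hline_at. do 2 f_equal. field. exact Ha. Qed.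

Lemma hx_hline_at p a b x : a <> 0 -> hx (hline_at p a b x) = x.
Proof. intros Ha. unfold hline_at, hmul, hvec; simpl. field. exact Ha. Qed.

Lemma hline_proj_z_taylor p a b x xs : a <> 0 ->
  hline_proj_z p a b x =
  hline_proj_z p a b xs - (x - xs) * hy (hline_at p a b xs) - b / a * (x - xs) ^ 2 / 2.
Proof. intros Ha. unfold hline_proj_z, hline_at, Pi, hmul, hvec; simpl. field. exact Ha. Qed.

Lemma hline_proj_z_continuous p a b : continuity (hline_proj_z p a b).
Proof. unfold hline_proj_z, hline_at, Pi, hmul, hvec; simpl. reg. Qed.

Lemma hline_proj_z_tangent p1 a1 b1 p2 a2 b2 xs : a1 <> 0 -> a2 <> 0 ->
  hline_at p1 a1 b1 xs = hline_at p2 a2 b2 xs -> forall x,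
  hline_proj_z p1 a1 b1 x - hline_proj_z p2 a2 b2 x =
  - (b1 / a1 - b2 / a2) * (x - xs) ^ 2 / 2.
Proof.
  intros Ha1 Ha2 Hmeet x.
  assert (Hz : hline_proj_z p1 a1 b1 xs = hline_proj_z p2 a2 b2 xs)
    by (unfold hline_proj_z; rewrite Hmeet; reflexivity).
  rewrite (hline_proj_z_taylor p1 a1 b1 x xs), (hline_proj_z_taylor p2 a2 b2 x xs)
    by assumption.
  rewrite Hz, Hmeet. field. split; assumption.
Qed.

Lemma Pi_ext q1 q2 : hx q1 = hx q2 -> hz (Pi q1) = hz (Pi q2) -> Pi q1 = Pi q2.
Proof.
  intros Hx Hz. change (mkH (hx q1) 0 (hz (Pi q1)) = mkH (hx q2) 0 (hz (Pi q2))).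
  rewrite Hx, Hz. reflexivity.
Qed.

Lemma igraph_hy Om f q : igraph Om f q -> hy q = f (hx (Pi q)) (hz (Pi q)).
Proof.
  intros (x & z & _ & ->). unfold Pi, hmul; simpl.
  rewrite !Rplus_0_l, !Rplus_0_r. f_equal. field.
Qed.

Lemma igraph_Pi_injective Om f q1 q2 :
  igraph Om f q1 -> igraph Om f q2 -> Pi q1 = Pi q2 -> q1 = q2.
Proof.
  intros G1 G2 E.
  assert (Hy : hy q1 = hy q2)
    by (rewrite (igraph_hy _ _ _ G1), (igraph_hy _ _ _ G2), E; reflexivity).
  destruct q1 as [x1 y1 z1], q2 as [x2 y2 z2]. unfold Pi in E; simpl in *.
  injection E as Ex Ez. subst. f_equal. lra.
Qed.

Lemma between_affine c a x0 xs x1 : a <> 0 ->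
  between x0 xs x1 -> between ((x0 - c) / a) ((xs - c) / a) ((x1 - c) / a).
Proof.
  unfold between. intros Ha Hb.
  replace (((xs - c) / a - (x0 - c) / a) * ((x1 - c) / a - (xs - c) / a))
    with ((xs - x0) * (x1 - xs) / (a * a)) by (field; exact Ha).
  apply Rmult_le_pos; [exact Hb |].
  left. apply Rinv_0_lt_compat, (Rsqr_pos_lt a Ha).
Qed.

Lemma in_param_between lo hi t0 s t1 :
  in_param lo hi t0 -> in_param lo hi t1 -> between t0 s t1 -> in_param lo hi s.
Proof.
  unfold between. intros H0 H1 Hb.
  assert (Hs : t0 <= s <= t1 \/ t1 <= s <= t0).
  { destruct (Rle_dec t0 s), (Rle_dec s t1); [left; lra | | | right; lra]; nra. }
  destruct lo, hi; unfold in_param in *; lra.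
Qed.

Lemma IVT_between (D : R -> R) x0 x1 :
  continuity D -> D x0 * D x1 <= 0 -> exists xs, between x0 xs x1 /\ D xs = 0.
Proof.
  unfold between. intros HD Hs. destruct (Rle_dec x0 x1) as [Hle | Hgt].
  - destruct (IVT_cor D x0 x1 HD Hle Hs) as [xs [Hxs HD0]].
    exists xs. split; [nra | exact HD0].
  - rewrite Rmult_comm in Hs.
    destruct (IVT_cor D x1 x0 HD (Rlt_le _ _ (Rnot_le_lt _ _ Hgt)) Hs) as [xs [Hxs HD0]].
    exists xs. split; [nra | exact HD0].
Qed.

Section GraphSegments.

Variables (Om : R -> R -> Prop) (f : R -> R -> R).
Variables (p1 p2 : H) (a1 b1 a2 b2 : R) (lo1 hi1 lo2 hi2 : option R).
Hypotheses (Ha1 : a1 <> 0) (Ha2 : a2 <> 0).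
Hypothesis seg1_in_graph :
  forall t, in_param lo1 hi1 t -> igraph Om f (hmul p1 (hvec t a1 b1)).
Hypothesis seg2_in_graph :
  forall t, in_param lo2 hi2 t -> igraph Om f (hmul p2 (hvec t a2 b2)).

Lemma graph_segments_no_crossing x0 x1 :
  in_param lo1 hi1 ((x0 - hx p1) / a1) -> in_param lo1 hi1 ((x1 - hx p1) / a1) ->
  in_param lo2 hi2 ((x0 - hx p2) / a2) -> in_param lo2 hi2 ((x1 - hx p2) / a2) ->
  hline_proj_z p2 a2 b2 x0 < hline_proj_z p1 a1 b1 x0 ->
  hline_proj_z p1 a1 b1 x1 < hline_proj_z p2 a2 b2 x1 -> False.
Proof.
  intros H10 H11 H20 H21 Hx0 Hx1.
  set (D x := hline_proj_z p1 a1 b1 x - hline_proj_z p2 a2 b2 x).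
  assert (HD : continuity D)
    by exact (continuity_minus _ _ (hline_proj_z_continuous _ _ _)
                (hline_proj_z_continuous _ _ _)).
  destruct (IVT_between D x0 x1 HD) as [xs [Hbw HDs]]; [unfold D; nra |].
  assert (Hmeet : hline_at p1 a1 b1 xs = hline_at p2 a2 b2 xs).
  { apply (igraph_Pi_injective Om f).
    - apply seg1_in_graph, (in_param_between _ _ _ _ _ H10 H11), between_affine; assumption.
    - apply seg2_in_graph, (in_param_between _ _ _ _ _ H20 H21), between_affine; assumption.
    - apply Pi_ext; [rewrite !hx_hline_at by assumption; reflexivity |].
      unfold D, hline_proj_z in HDs. lra. }
  pose proof (hline_proj_z_tangent _ _ _ _ _ _ _ Ha1 Ha2 Hmeet) as Htan.
  pose proof (Htan x0). pose proof (Htan x1).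
  pose proof (pow2_ge_0 (x0 - xs)). pose proof (pow2_ge_0 (x1 - xs)).
  destruct (Rle_dec 0 (b1 / a1 - b2 / a2)); nra.
Qed.

End GraphSegments.

Section RulingProjection.

Variables (Rl : hset) (I : R -> Prop) (g : R -> R).
Variables (p : H) (a b : R) (lo hi : option R).
Hypothesis Rl_param :
  forall q, Rl q <-> exists t, in_param lo hi t /\ q = hmul p (hvec t a b).
Hypothesis Rl_proj :
  forall q, (exists r, Rl r /\ Pi r = q) <-> (exists x, I x /\ q = mkH x 0 (g x)).

Lemma ruling_proj_point x : I x ->
  exists t, in_param lo hi t /\ hx p + t * a = x /\ hz (Pi (hmul p (hvec t a b))) = g x.
Proof.
  intros Hx. destruct (proj2 (Rl_proj (mkH x 0 (g x)))) as (r & Hr & HPi); [eauto |].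
  destruct (proj1 (Rl_param r) Hr) as (t & Ht & ->).
  exists t. split; [exact Ht | split].
  - rewrite <- (hx_hmul_hvec p t a b). exact (f_equal hx HPi).
  - rewrite HPi. reflexivity.
Qed.

Lemma ruling_proj_nonvertical x0 x1 : I x0 -> I x1 -> x0 <> x1 -> a <> 0.
Proof.
  intros H0 H1 Hne Ha. apply Hne.
  destruct (ruling_proj_point x0 H0) as (t0 & _ & <- & _).
  destruct (ruling_proj_point x1 H1) as (t1 & _ & <- & _).
  rewrite Ha. ring.
Qed.

Lemma ruling_proj_graph x : a <> 0 -> I x ->
  in_param lo hi ((x - hx p) / a) /\ g x = hline_proj_z p a b x.
Proof.
  intros Ha Hx. destruct (ruling_proj_point x Hx) as (t & Ht & Hxt & Hz).
  unfold hline_proj_z. rewrite (hline_at_param p a b t x Ha Hxt), Hz.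
  replace ((x - hx p) / a) with t by (rewrite <- Hxt; field; exact Ha).
  split; [exact Ht | reflexivity].
Qed.

End RulingProjection.

Lemma rulings_proj_no_crossing Om f R1 R2 I1 I2 g1 g2 :
  is_ruling (igraph Om f) R1 -> is_ruling (igraph Om f) R2 ->
  (forall q, (exists r, R1 r /\ Pi r = q) <-> (exists x, I1 x /\ q = mkH x 0 (g1 x))) ->
  (forall q, (exists r, R2 r /\ Pi r = q) <-> (exists x, I2 x /\ q = mkH x 0 (g2 x))) ->
  forall x0 x1, I1 x0 /\ I2 x0 -> I1 x1 /\ I2 x1 ->
  g2 x0 < g1 x0 -> g1 x1 < g2 x1 -> False.
Proof.
  intros (p1 & a1 & b1 & lo1 & hi1 & _ & _ & hR1 & hR1S & _)
         (p2 & a2 & b2 & lo2 & hi2 & _ & _ & hR2 & hR2S & _) hg1 hg2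
         x0 x1 [H10 H20] [H11 H21] Hx0 Hx1.
  assert (Hne : x0 <> x1) by (intros ->; lra).
  pose proof (ruling_proj_nonvertical _ _ _ _ _ _ _ _ hR1 hg1 _ _ H10 H11 Hne) as Ha1.
  pose proof (ruling_proj_nonvertical _ _ _ _ _ _ _ _ hR2 hg2 _ _ H20 H21 Hne) as Ha2.
  destruct (ruling_proj_graph _ _ _ _ _ _ _ _ hR1 hg1 x0 Ha1 H10) as [T10 G10].
  destruct (ruling_proj_graph _ _ _ _ _ _ _ _ hR1 hg1 x1 Ha1 H11) as [T11 G11].
  destruct (ruling_proj_graph _ _ _ _ _ _ _ _ hR2 hg2 x0 Ha2 H20) as [T20 G20].
  destruct (ruling_proj_graph _ _ _ _ _ _ _ _ hR2 hg2 x1 Ha2 H21) as [T21 G21].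
  rewrite G10, G20 in Hx0. rewrite G11, G21 in Hx1.
  apply (graph_segments_no_crossing Om f p1 p2 a1 b1 a2 b2 lo1 hi1 lo2 hi2 Ha1 Ha2)
    with (x0 := x0) (x1 := x1); try assumption.
  - intros t Ht. apply hR1S, hR1. eauto.
  - intros t Ht. apply hR2S, hR2. eauto.
Qed.

Lemma le_or_ge_of_no_crossing (P : R -> Prop) (g1 g2 : R -> R) :
  (forall x0 x1, P x0 -> P x1 -> g2 x0 < g1 x0 -> g1 x1 < g2 x1 -> False) ->
  (forall x, P x -> g1 x <= g2 x) \/ (forall x, P x -> g1 x >= g2 x).
Proof.
  intros Hno.
  destruct (classic (exists x0, P x0 /\ g2 x0 < g1 x0)) as [(x0 & P0 & Hx0) | Hnone].
  - right. intros x1 P1. apply Rnot_lt_ge. exact (Hno x0 x1 P0 P1 Hx0).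
  - left. intros x Px. apply Rnot_lt_le. intros Hx. apply Hnone. eauto.
Qed.

Theorem lemma2p1 (Om : R -> R -> Prop) (f : R -> R -> R)
  (hOm : open_V0 Om) (hf : continuous_on_V0 Om f)
  (hruled : ruled_surface (igraph Om f))
  (R1 R2 : hset)
  (hR1 : is_ruling (igraph Om f) R1) (hR2 : is_ruling (igraph Om f) R2)
  (hdist : ~ (forall q, R1 q <-> R2 q))
  (I1 I2 : R -> Prop) (g1 g2 : R -> R)
  (hg1 : forall q, (exists r, R1 r /\ Pi r = q) <-> (exists x, I1 x /\ q = mkH x 0 (g1 x)))
  (hg2 : forall q, (exists r, R2 r /\ Pi r = q) <-> (exists x, I2 x /\ q = mkH x 0 (g2 x))) :
  (forall x, I1 x -> I2 x -> g1 x <= g2 x) \/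
  (forall x, I1 x -> I2 x -> g1 x >= g2 x).
Proof.
  destruct (le_or_ge_of_no_crossing (fun x => I1 x /\ I2 x) g1 g2) as [Hle | Hge].
  - exact (rulings_proj_no_crossing Om f R1 R2 I1 I2 g1 g2 hR1 hR2 hg1 hg2).
  - left. intros x H1 H2. exact (Hle x (conj H1 H2)).
  - right. intros x H1 H2. exact (Hge x (conj H1 H2)).
Qed.
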